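(* For all integers $M,N\ge1$, $$d_4^2(M,N)=\beta_4^2(M,N)+\delta_{2|M}\,\frac{(M-2)(N-1)}{M^4N^3},$$ where $\delta_{2|M}=1$ if $M$ is even and $\delta_{2|M}=0$ if $M$ is odd, and $\beta_4^2(M,N)=\delta_4(M,N)+\frac1M(1-\delta_4(M,N))$.
   Context: For integers $M,N,p,r\ge1$, consider triples $(i,a,b)$ with $i\in\mathbb Z_M^r$, $a\in\mathbb Z_M^p$, $b\in\mathbb Z_N^p$, with cyclic conventions $i_{r+1}=i_1$, $b_{p+1}=b_1$. For $x\in\{1,\dots,r\}$, condition $(E_x)$ says that the multisets $\{(i_x+a_y,b_y),(i_{x+1}+a_y,b_{y+1}):y=1,\dots,p\}$ and $\{(i_x+a_y,b_{y+1}),(i_{x+1}+a_y,b_y):y=1,\dots,p\}$ of elements of $\mathbb Z_M\times\mathbb Z_N$ (counted with multiplicity) coincide. Define $d_p^r(M,N)=\frac{1}{M^{p+r}N^p}\#\{(i,a,b):(E_x)\text{ holds for all }x\}$ and $\delta_p(M,N)=\frac{1}{(MN)^p}\#\{(a,b)\in\mathbb Z_M^p\times\mathbb Z_N^p:\{(a_y,b_y)\}_{y=1}^p=\{(a_y,b_{y+1})\}_{y=1}^p\text{ as multisets}\}$. *)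

(* Z_M is modelled by 'I_M with addition mod M (valid for all M >= 1). *)
From HB Require Import structures.
From mathcomp Require Import all_boot all_order all_algebra.
Set Implicit Arguments. Unset Strict Implicit. Unset Printing Implicit Defensive.
Import Order.TTheory GRing.Theory Num.Theory.

(* Elements of Z_M x Z_N are represented as pairs of canonical residues (nat * nat);
   the cyclic successor of an index is [ordS]. Multisets = sequences up to perm_eq. *)
Definition condE (M N r p : nat) (i : {ffun 'I_r -> 'I_M}) (a : {ffun 'I_p -> 'I_M})
    (b : {ffun 'I_p -> 'I_N}) (x : 'I_r) : bool :=
  perm_eq
    (flatten [seq [:: ((i x + a y) %% M, val (b y));
                      ((i (ordS x) + a y) %% M, val (b (ordS y)))] | y <- enum 'I_p])
    (flatten [seq [:: ((i x + a y) %% M, val (b (ordS y)));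
                      ((i (ordS x) + a y) %% M, val (b y))] | y <- enum 'I_p]).

Definition count_d (M N p r : nat) : nat :=
  #|[set t : {ffun 'I_r -> 'I_M} * {ffun 'I_p -> 'I_M} * {ffun 'I_p -> 'I_N}
       | [forall x : 'I_r, condE t.1.1 t.1.2 t.2 x]]|.

Definition d_pr (p r M N : nat) : rat :=
  (count_d M N p r)%:R / ((M ^ (p + r) * N ^ p)%N)%:R.

Definition count_delta (M N p : nat) : nat :=
  #|[set t : {ffun 'I_p -> 'I_M} * {ffun 'I_p -> 'I_N}
       | perm_eq [seq (val (t.1 y), val (t.2 y)) | y <- enum 'I_p]
                 [seq (val (t.1 y), val (t.2 (ordS y))) | y <- enum 'I_p]]|.

Definition delta_p (p M N : nat) : rat :=
  (count_delta M N p)%:R / ((M * N) ^ p)%N%:R.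

Definition beta_p2 (p M N : nat) : rat :=
  delta_p p M N + (M%:R)^-1 * (1 - delta_p p M N).

From HB Require Import structures.
From mathcomp Require Import all_boot all_order all_algebra.
From mathcomp Require Import zify ring.

(* For r = 2 the conditions (E_1) and (E_2) coincide, and after translating by i_1 they say that
     D(c, w) = #{y | (a_y, b_y) = (c, w)} - #{y | (a_y, b_(y+1)) = (c, w)}
   is invariant under c |-> c + e, where e = i_1 - i_2; D = 0 is the condition counted by delta_4.
   A surplus D(c, w) > 0 needs a position y with a_y = c and b_y = w <> b_(y+1), and a cyclic word
   of length 4 has at most two such positions. Hence if e <> 0 and D <> 0, the orbit of c under
   translation by e has two points, so 2e = M, and the configuration is forced: b = (u, v, u, v)
   with u <> v, and a_(y+2) = a_y + M/2 with a_0, a_1 in distinct classes mod M/2. Conversely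
   these configurations, e = 0 and D = 0 are solutions. So for fixed (a, b) and i_1 there are M
   choices of i_2 if D = 0, and 1 + [M even and (a, b) forced] otherwise; finally there are
   M(M - 2) such a and N(N - 1) such b. *)

Set Implicit Arguments. Unset Strict Implicit. Unset Printing Implicit Defensive.

Lemma modn_lt_double x M : x < M + M -> x %% M = if x < M then x else x - M.
Proof.
case: ifP => [xM _|xM xMM]; first exact: modn_small.
have -> : x = (x - M) + M by lia.
by rewrite modnDr modn_small; lia.
Qed.

Section HalfTurn.
Variables (M e : nat).

Lemma shift_neq c : 0 < e -> e < M -> c < M -> (c + e) %% M != c.
Proof.
by move=> e0 eM cM; rewrite modn_lt_double; [case: ifP => ?; apply/eqP|]; lia.
Qed.

Lemma shift2_neq c : 0 < e -> e < M -> e.*2 != M -> c < M ->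
  ((c + e) %% M + e) %% M != c.
Proof.
move=> e0 eM /eqP e2 cM; rewrite [(c + e) %% M]modn_lt_double; last lia.
by case: ifP => ?; rewrite modn_lt_double; try case: ifP => ?; apply/eqP; lia.
Qed.

Hypothesis eM : e.*2 = M.

Lemma half_shiftK c : c < M -> ((c + e) %% M + e) %% M = c.
Proof.
move=> cM; rewrite [(c + e) %% M]modn_lt_double; last lia.
by case: ifP => ?; rewrite modn_lt_double; try case: ifP => ?; lia.
Qed.

Lemma half_shift_inj x c : x < M -> c < M -> ((x + e) %% M == (c + e) %% M) = (x == c).
Proof.
move=> xM cM; apply/eqP/eqP => [E|-> //].
by rewrite -(half_shiftK xM) E half_shiftK.
Qed.

Lemma eq_half_shift x c : x < M -> c < M -> (x == (c + e) %% M) = ((x + e) %% M == c).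
Proof. by move=> xM cM; apply/eqP/eqP => [->|<-]; rewrite half_shiftK. Qed.

End HalfTurn.

(* The residue of [s - t] modulo [M] for [t <= M], avoiding truncated subtraction. *)
Definition sub_mod M s t := (s + (M - t)) %% M.

Lemma perm_flatten_pairs (S : Type) (T : eqType) (f g : S -> T) (s : seq S) :
  perm_eq (flatten [seq [:: f y; g y] | y <- s]) (map f s ++ map g s).
Proof.
elim: s => //= y s IH; rewrite perm_cons perm_sym -cat1s perm_catCA /=.
by rewrite perm_cons perm_sym.
Qed.

Section PairMultiplicity.
Variable p : nat.
Implicit Types (a b : 'I_p -> nat) (M s t e c w : nat).

Definition pairs a b : seq (nat * nat) := [seq (a y, b y) | y <- enum 'I_p].
Definition pair_count a b c w : nat := count_mem (c, w) (pairs a b).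
Definition succ b : 'I_p -> nat := fun y => b (ordS y).
Definition shifted M s a : 'I_p -> nat := fun y => (s + a y) %% M.

Definition exchange_balanced M s t a b := forall c w,
  pair_count (shifted M s a) b c w + pair_count (shifted M t a) (succ b) c w =
  pair_count (shifted M s a) (succ b) c w + pair_count (shifted M t a) b c w.

Definition balanced M e a b := forall c w, c < M ->
  pair_count a b c w + pair_count a (succ b) ((c + e) %% M) w =
  pair_count a (succ b) c w + pair_count a b ((c + e) %% M) w.

Lemma exchange_balanced_sym M s t a b :
  exchange_balanced M s t a b <-> exchange_balanced M t s a b.
Proof. by split=> H c w; have := H c w; lia. Qed.

Lemma pair_count_shifted M s a b c w : s < M -> (forall y, a y < M) -> c < M ->
  pair_count (shifted M s a) b ((s + c) %% M) w = pair_count a b c w.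
Proof.
move=> sM aM cM; rewrite /pair_count.
have -> : pairs (shifted M s a) b = [seq ((s + z.1) %% M, z.2) | z <- pairs a b].
  by rewrite /pairs -map_comp.
rewrite count_map.
apply: eq_in_count => -[x v] /mapP[y _ [-> _]] /=.
by rewrite !xpair_eqE -[_ == _ %% M]/(_ == _ %[mod M]) eqn_modDl !modn_small.
Qed.

Lemma pair_count_shifted_out M s a b c w :
  0 < M -> M <= c -> pair_count (shifted M s a) b c w = 0.
Proof.
move=> M0 Mc; apply/count_memPn/mapP => -[y _ [cE _]].
by have := ltn_pmod (s + a y) M0; rewrite -[_ %% M]/(shifted M s a y) -cE; lia.
Qed.

Lemma exchange_balancedE M s t a b : s < M -> t < M -> (forall y, a y < M) ->
  exchange_balanced M s t a b <-> balanced M (sub_mod M s t) a b.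
Proof.
move=> sM tM aM; set e := sub_mod M s t; have M0 : 0 < M by lia.
have modM_lt c : c %% M < M by rewrite ltn_pmod.
have shift_e c : (t + (c + e) %% M) %% M = (s + c) %% M.
  rewrite /e /sub_mod modnDmr addnA modnDmr (_ : t + c + _ = s + c + M) ?modnDr //; lia.
have shifted_countE c b' w : c < M ->
  pair_count (shifted M s a) b' ((s + c) %% M) w = pair_count a b' c w /\
  pair_count (shifted M t a) b' ((s + c) %% M) w = pair_count a b' ((c + e) %% M) w.
  by move=> cM; split; [exact: pair_count_shifted | rewrite -shift_e pair_count_shifted].
split=> [H c w cM | H v w].
  have := H ((s + c) %% M) w.
  case: (shifted_countE c b w cM) => -> ->.
  by case: (shifted_countE c (succ b) w cM) => -> ->.
have [vM | Mv] := ltnP v M; last by rewrite !pair_count_shifted_out.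
have -> : v = (s + (v + (M - s)) %% M) %% M.
  rewrite modnDmr addnA (_ : s + v + _ = v + M) ?modnDr ?modn_small //; lia.
have cM := modM_lt (v + (M - s)); have := H _ w cM.
case: (shifted_countE _ b w cM) => -> ->.
by case: (shifted_countE _ (succ b) w cM) => -> ->; lia.
Qed.

Lemma condE_exchange M N r (i : {ffun 'I_r -> 'I_M}) (a : {ffun 'I_p -> 'I_M})
    (b : {ffun 'I_p -> 'I_N}) x :
  condE i a b x <-> exchange_balanced M (i x) (i (ordS x)) (fun y => a y) (fun y => b y).
Proof.
rewrite /condE (permPl (perm_flatten_pairs _ _ _)) (permPr (perm_flatten_pairs _ _ _)).
split=> [/permP H c w | H]; first by have := H (pred1 (c, w)); rewrite !count_cat.
by apply/allP => -[c w] _; rewrite /= !count_cat; apply/eqP; apply: H.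
Qed.

Definition succ_perm a b := perm_eq (pairs a b) (pairs a (succ b)).

Lemma succ_permP a b :
  reflect (forall c w, pair_count a b c w = pair_count a (succ b) c w) (succ_perm a b).
Proof.
apply: (iffP idP) => [/permP H c w | H]; first exact: H.
by apply/allP => -[c w] _; apply/eqP/H.
Qed.

Lemma succ_permPn a b :
  ~~ succ_perm a b -> exists c w, pair_count a b c w != pair_count a (succ b) c w.
Proof. by case/allPn => -[c w] _ neq; exists c, w. Qed.

Lemma balanced0 M a b : balanced M 0 a b.
Proof. by move=> c w cM; rewrite addn0 modn_small // addnC. Qed.

Lemma succ_perm_balanced M e a b : succ_perm a b -> balanced M e a b.
Proof. by move/succ_permP => H c w _; rewrite !H. Qed.

End PairMultiplicity.

(* Words of length 4 over [bool] describe positions: [x_y] for [a_y = c], [z_y] for [b_y = w].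
   A surplus of [x] forces a cyclic descent [x_y, z_y, ~~ z_(y+1)]; a cyclic word of length 4
   has at most two descents, and two descents sit at positions of equal parity. *)
Fixpoint all_words n (P : seq bool -> bool) : bool :=
  if n is n'.+1 then all_words n' (fun s => P (true :: s)) && all_words n' (fun s => P (false :: s))
  else P [::].

Lemma all_wordsP n P : all_words n P -> forall s, size s = n -> P s.
Proof.
elim: n P => [|n IH] P /=; first by move=> ? [].
by case/andP=> Pt Pf [|[] s] //= [sz]; [exact: (IH _ Pt s sz) | exact: (IH _ Pf s sz)].
Qed.

Definition surplus4 (x0 x1 x2 x3 z0 z1 z2 z3 : bool) : bool :=
  (x0 && z1) + (x1 && z2) + (x2 && z3) + (x3 && z0) <
  (x0 && z0) + (x1 && z1) + (x2 && z2) + (x3 && z3).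

Definition disjoint4 (x0 x1 x2 x3 y0 y1 y2 y3 : bool) : bool :=
  [&& ~~ (x0 && y0), ~~ (x1 && y1), ~~ (x2 && y2) & ~~ (x3 && y3)].

Lemma no_three_surplus4 x0 x1 x2 x3 y0 y1 y2 y3 u0 u1 u2 u3 z0 z1 z2 z3 :
  disjoint4 x0 x1 x2 x3 y0 y1 y2 y3 -> disjoint4 x0 x1 x2 x3 u0 u1 u2 u3 ->
  disjoint4 y0 y1 y2 y3 u0 u1 u2 u3 ->
  surplus4 x0 x1 x2 x3 z0 z1 z2 z3 -> surplus4 y0 y1 y2 y3 z0 z1 z2 z3 ->
  surplus4 u0 u1 u2 u3 z0 z1 z2 z3 -> False.
Proof.
pose W s := if s is [:: x0; x1; x2; x3; y0; y1; y2; y3; u0; u1; u2; u3; z0; z1; z2; z3]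
  then [&& disjoint4 x0 x1 x2 x3 y0 y1 y2 y3, disjoint4 x0 x1 x2 x3 u0 u1 u2 u3,
           disjoint4 y0 y1 y2 y3 u0 u1 u2 u3, surplus4 x0 x1 x2 x3 z0 z1 z2 z3
         & surplus4 y0 y1 y2 y3 z0 z1 z2 z3] ==> ~~ surplus4 u0 u1 u2 u3 z0 z1 z2 z3
  else true.
have /all_wordsP/(_ [:: x0; x1; x2; x3; y0; y1; y2; y3; u0; u1; u2; u3; z0; z1; z2; z3] erefl)
  : all_words 16 W by vm_compute.
move=> /implyP W' dxy dxu dyu sx sy; apply/negP/W'.
exact/and5P.
Qed.

Lemma two_surplus4 x0 x1 x2 x3 y0 y1 y2 y3 z0 z1 z2 z3 :
  disjoint4 x0 x1 x2 x3 y0 y1 y2 y3 ->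
  surplus4 x0 x1 x2 x3 z0 z1 z2 z3 -> surplus4 y0 y1 y2 y3 z0 z1 z2 z3 ->
  [&& z0, ~~ z1, z2, ~~ z3 & [&& x0 && y2 || y0 && x2, ~~ x1, ~~ y1, ~~ x3 & ~~ y3]] ||
  [&& ~~ z0, z1, ~~ z2, z3 & [&& x1 && y3 || y1 && x3, ~~ x0, ~~ y0, ~~ x2 & ~~ y2]].
Proof.
pose W s := if s is [:: x0; x1; x2; x3; y0; y1; y2; y3; z0; z1; z2; z3]
  then [&& disjoint4 x0 x1 x2 x3 y0 y1 y2 y3, surplus4 x0 x1 x2 x3 z0 z1 z2 z3
         & surplus4 y0 y1 y2 y3 z0 z1 z2 z3] ==>
  [&& z0, ~~ z1, z2, ~~ z3 & [&& x0 && y2 || y0 && x2, ~~ x1, ~~ y1, ~~ x3 & ~~ y3]] ||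
  [&& ~~ z0, z1, ~~ z2, z3 & [&& x1 && y3 || y1 && x3, ~~ x0, ~~ y0, ~~ x2 & ~~ y2]]
  else true.
have /all_wordsP/(_ [:: x0; x1; x2; x3; y0; y1; y2; y3; z0; z1; z2; z3] erefl)
  : all_words 12 W by vm_compute.
by move=> /implyP W' *; apply: W'; apply/and3P.
Qed.

Definition pair_count4 (a0 a1 a2 a3 b0 b1 b2 b3 c w : nat) : nat :=
  ((a0 == c) && (b0 == w)) + ((a1 == c) && (b1 == w)) +
  ((a2 == c) && (b2 == w)) + ((a3 == c) && (b3 == w)).

Definition balanced4 M e (a0 a1 a2 a3 b0 b1 b2 b3 : nat) := forall c w, c < M ->
  pair_count4 a0 a1 a2 a3 b0 b1 b2 b3 c w +
  pair_count4 a0 a1 a2 a3 b1 b2 b3 b0 ((c + e) %% M) w =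
  pair_count4 a0 a1 a2 a3 b1 b2 b3 b0 c w +
  pair_count4 a0 a1 a2 a3 b0 b1 b2 b3 ((c + e) %% M) w.

Definition alternating4 (b0 b1 b2 b3 : nat) : bool := [&& b2 == b0, b3 == b1 & b0 != b1].

Definition antipodal4 M (a0 a1 a2 a3 : nat) : bool :=
  [&& a2 == (a0 + M./2) %% M, a3 == (a1 + M./2) %% M, a1 != a0 & a1 != (a0 + M./2) %% M].

Section Surplus4.
Variables (M e a0 a1 a2 a3 b0 b1 b2 b3 : nat).
Hypotheses (a0M : a0 < M) (a1M : a1 < M) (a2M : a2 < M) (a3M : a3 < M).
Local Notation P c w := (pair_count4 a0 a1 a2 a3 b0 b1 b2 b3 c w).
Local Notation Q c w := (pair_count4 a0 a1 a2 a3 b1 b2 b3 b0 c w).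
Local Notation sh c := ((c + e) %% M).
Hypothesis bal : balanced4 M e a0 a1 a2 a3 b0 b1 b2 b3.
Hypotheses (e_gt0 : 0 < e) (e_ltM : e < M).

Lemma surplus4_ltM c w : Q c w < P c w -> c < M.
Proof.
apply: contraTT; rewrite -leqNgt => Mc.
have neq k : k < M -> (k == c) = false.
  by move=> kM; apply/negbTE; rewrite neq_ltn (leq_trans kM).
by rewrite /pair_count4 !neq.
Qed.

Lemma surplus4_shift c w : Q c w < P c w -> Q (sh c) w < P (sh c) w.
Proof. by move=> s0; have := bal w (surplus4_ltM s0); lia. Qed.

Lemma disjoint4_eq c c' : c != c' ->
  disjoint4 (a0 == c) (a1 == c) (a2 == c) (a3 == c) (a0 == c') (a1 == c') (a2 == c') (a3 == c').
Proof.
move=> cc'; have excl k : ~~ ((k == c) && (k == c')).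
  by apply/negP => /andP[/eqP -> ]; rewrite (negbTE cc').
by rewrite /disjoint4 !excl.
Qed.

Lemma surplus4_half c w : Q c w < P c w -> e.*2 = M.
Proof.
move=> s0; case: (eqVneq e.*2 M) => // e2; exfalso.
have cM := surplus4_ltM s0; have c1M : sh c < M by rewrite ltn_pmod //; lia.
have s1 := surplus4_shift s0; have s2 := surplus4_shift s1.
apply: (no_three_surplus4 _ _ _ s0 s1 s2).
- by apply: disjoint4_eq; rewrite eq_sym shift_neq.
- by apply: disjoint4_eq; rewrite eq_sym shift2_neq.
- by apply: disjoint4_eq; rewrite eq_sym shift_neq.
Qed.

Section HalfPeriod.
Hypothesis eM : e.*2 = M.
Local Notation even_case c w := [&& b0 == w, b1 != w, b2 == w, b3 != w &
  [&& (a0 == c) && (a2 == sh c) || (a0 == sh c) && (a2 == c),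
      a1 != c, a1 != sh c, a3 != c & a3 != sh c]].
Local Notation odd_case c w := [&& b0 != w, b1 == w, b2 != w, b3 == w &
  [&& (a1 == c) && (a3 == sh c) || (a1 == sh c) && (a3 == c),
      a0 != c, a0 != sh c, a2 != c & a2 != sh c]].

Lemma surplus4_alternating c w : Q c w < P c w -> even_case c w || odd_case c w.
Proof.
move=> s0; have cM := surplus4_ltM s0.
by apply: (two_surplus4 _ s0 (surplus4_shift s0)); apply: disjoint4_eq; rewrite eq_sym shift_neq.
Qed.

Lemma even_case_antipodal c w :
  even_case c w -> alternating4 b0 b1 b2 b3 && antipodal4 M a0 a1 a2 a3.
Proof.
(* then [(a1, b1)] is a surplus point, and the odd case there gives [a3 = a1 + e] *)
case/and5P=> /eqP b0w b1w /eqP b2w _ /and5P[a02 a1c a1c' _ _]; subst w.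
have half : M./2 = e by rewrite -eM doubleK.
have cM : c < M by case/orP: a02 => /andP[/eqP a0c /eqP a2c]; [rewrite -a0c | rewrite -a2c].
have [a0E a2E] : (a0 == c) || (a0 == sh c) /\ a2 = sh a0.
  by case/orP: a02 => /andP[/eqP-> /eqP->]; rewrite ?eqxx ?orbT ?half_shiftK.
have a1a0 : (a0 == a1) = false.
  by apply/negbTE; case/orP: a0E => /eqP->; rewrite eq_sym.
have a1a2 : (a2 == a1) = false.
  by apply/negbTE; move: a02 => /orP[] /andP[_ /eqP->]; rewrite eq_sym.
have b1b0 : (b0 == b1) = false by rewrite eq_sym (negbTE b1w).
have s1 : Q a1 b1 < P a1 b1.
  by rewrite /pair_count4 a1a0 a1a2 b2w b1b0 !eqxx /= andbF; case: (_ && _).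
case/orP: (surplus4_alternating s1) => /and5P[]; first by rewrite b1b0.
move=> _ _ _ /eqP b31 /and5P[a13 _ _ _ _].
have a3E : a3 = sh a1.
  move: a13; rewrite eqxx [a1 == sh a1]eq_sym (negbTE (shift_neq e_gt0 e_ltM a1M)) orbF.
  by move/eqP.
by rewrite /alternating4 /antipodal4 half -a2E -a3E b2w b31 b1b0 eq_sym a1a0 eq_sym a1a2 !eqxx.
Qed.

Lemma surplus4_antipodal c w : Q c w < P c w ->
  alternating4 b0 b1 b2 b3 && antipodal4 M a0 a1 a2 a3.
Proof.
(* the odd case at [(c, w)] yields the even case at [(a0, b0)] *)
move=> s0; case/orP: (surplus4_alternating s0); first exact: even_case_antipodal.
case/and5P=> b0w /eqP b1w b2w /eqP b3w /and5P[a13 a0c a0c' _ _]; subst w.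
have a1a0 : (a1 == a0) = false.
  by apply/negbTE; case/orP: a13 => /andP[/eqP-> _]; rewrite eq_sym.
have a3a0 : (a3 == a0) = false.
  by apply/negbTE; case/orP: a13 => /andP[_ /eqP->]; rewrite eq_sym.
have s1 : Q a0 b0 < P a0 b0.
  rewrite /pair_count4 a1a0 a3a0 b3w [b1 == b0]eq_sym (negbTE b0w) !eqxx /= andbF.
  by case: (_ && _).
case/orP: (surplus4_alternating s1); first exact: even_case_antipodal.
by rewrite eqxx.
Qed.

End HalfPeriod.
End Surplus4.

Lemma pair_count4_rev a0 a1 a2 a3 b0 b1 b2 b3 c w :
  pair_count4 a0 a3 a2 a1 b0 b3 b2 b1 c w = pair_count4 a0 a1 a2 a3 b0 b1 b2 b3 c w.
Proof. by rewrite /pair_count4; lia. Qed.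

Lemma alternating4_rev b0 b1 b2 b3 : alternating4 b1 b0 b3 b2 = alternating4 b0 b1 b2 b3.
Proof. by rewrite /alternating4 andbCA [b1 == b0]eq_sym. Qed.

Lemma antipodal4_rev M a0 a1 a2 a3 : ~~ odd M -> a0 < M -> a1 < M -> a3 < M ->
  antipodal4 M a0 a3 a2 a1 = antipodal4 M a0 a1 a2 a3.
Proof.
move=> /even_halfK hM a0M a1M a3M.
rewrite /antipodal4 (eq_half_shift hM a1M a3M) [_ == a3]eq_sym.
case: (a3 =P (a1 + M./2) %% M) => [a3E|_]; last by rewrite !andbF.
rewrite a3E -(eq_half_shift hM a1M a0M) (half_shift_inj hM a1M a0M).
by case: (a1 == a0); case: (a1 == _); rewrite ?andbF.
Qed.

Section Classification4.
Variables (M e a0 a1 a2 a3 b0 b1 b2 b3 : nat).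
Hypotheses (a0M : a0 < M) (a1M : a1 < M) (a2M : a2 < M) (a3M : a3 < M).
Local Notation P c w := (pair_count4 a0 a1 a2 a3 b0 b1 b2 b3 c w).
Local Notation Q c w := (pair_count4 a0 a1 a2 a3 b1 b2 b3 b0 c w).
Local Notation sh c := ((c + e) %% M).

Lemma balanced4_antipodal c w : 0 < e -> e < M -> balanced4 M e a0 a1 a2 a3 b0 b1 b2 b3 ->
  P c w != Q c w -> e.*2 = M /\ alternating4 b0 b1 b2 b3 && antipodal4 M a0 a1 a2 a3.
Proof.
move=> e_gt0 e_ltM bal; rewrite eq_sym; case: ltngtP => // [s0 | s0] _.
  have eM := surplus4_half a0M a1M a2M a3M bal e_gt0 e_ltM s0.
  split=> //; exact (surplus4_antipodal a0M a1M a2M a3M bal e_gt0 e_ltM eM s0).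
(* reversing positions ([y |-> - y] in [a], [y |-> 1 - y] in [b]) turns a deficit into a surplus *)
have revP c' w' : pair_count4 a0 a3 a2 a1 b1 b0 b3 b2 c' w' = Q c' w' by rewrite pair_count4_rev.
have revQ c' w' : pair_count4 a0 a3 a2 a1 b0 b3 b2 b1 c' w' = P c' w' by rewrite pair_count4_rev.
have bal' : balanced4 M e a0 a3 a2 a1 b1 b0 b3 b2.
  by move=> c' w' cM; rewrite !revP !revQ; have := bal c' w' cM; lia.
have s0' : pair_count4 a0 a3 a2 a1 b0 b3 b2 b1 c w < pair_count4 a0 a3 a2 a1 b1 b0 b3 b2 c w.
  by rewrite revP revQ.
have eM := surplus4_half a0M a3M a2M a1M bal' e_gt0 e_ltM s0'.
have ev : ~~ odd M by rewrite -eM odd_double.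
split=> //; rewrite -alternating4_rev -antipodal4_rev //.
exact (surplus4_antipodal a0M a3M a2M a1M bal' e_gt0 e_ltM eM s0').
Qed.

Lemma antipodal4_balanced : e.*2 = M -> alternating4 b0 b1 b2 b3 && antipodal4 M a0 a1 a2 a3 ->
  balanced4 M e a0 a1 a2 a3 b0 b1 b2 b3.
Proof.
move=> eM /andP[/and3P[/eqP-> /eqP-> _] /and4P[/eqP-> /eqP-> _ _]] c w cM.
rewrite -eM doubleK eM /pair_count4 !half_shift_inj // !(eq_half_shift eM _ cM) //.
by move: (a0 == c) (a1 == c) (sh a0 == c) (sh a1 == c) (b0 == w) (b1 == w) => [] [] [] [] [] [].
Qed.

Lemma antipodal4_unbalanced : ~~ odd M ->
  alternating4 b0 b1 b2 b3 && antipodal4 M a0 a1 a2 a3 -> P a0 b0 != Q a0 b0.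
Proof.
move=> /even_halfK hM /andP[/and3P[/eqP b2E /eqP b3E b01] /and4P[/eqP a2E /eqP a3E a10 a1h]].
have h_gt0 : 0 < M./2 by lia.
have a20 : (a2 == a0) = false by rewrite a2E (negbTE (shift_neq _ _ _)) //; lia.
have a30 : (a3 == a0) = false by rewrite a3E -eq_half_shift // (negbTE a1h).
by rewrite /pair_count4 (negbTE a10) a20 a30 [b1 == b0]eq_sym (negbTE b01) !eqxx.
Qed.
End Classification4.

Notation alternating b := (alternating4 (b (inord 0)) (b (inord 1)) (b (inord 2)) (b (inord 3))).
Notation antipodal M a := (antipodal4 M (a (inord 0)) (a (inord 1)) (a (inord 2)) (a (inord 3))).

Lemma enum_ord4 : enum 'I_4 = [:: inord 0; inord 1; inord 2; inord 3].
Proof. by apply: (inj_map val_inj); rewrite val_enum_ord /= !inordK. Qed.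

Lemma pair_count_ord4 (a b : 'I_4 -> nat) c w : pair_count a b c w =
  pair_count4 (a (inord 0)) (a (inord 1)) (a (inord 2)) (a (inord 3))
        (b (inord 0)) (b (inord 1)) (b (inord 2)) (b (inord 3)) c w.
Proof. by rewrite /pair_count /pairs enum_ord4 /= !xpair_eqE addn0 !addnA. Qed.

Lemma pair_count_succ_ord4 (a b : 'I_4 -> nat) c w : pair_count a (succ b) c w =
  pair_count4 (a (inord 0)) (a (inord 1)) (a (inord 2)) (a (inord 3))
        (b (inord 1)) (b (inord 2)) (b (inord 3)) (b (inord 0)) c w.
Proof.
have succE k : k < 4 -> succ b (inord k) = b (inord (k.+1 %% 4)).
  by move=> k4; congr b; apply: val_inj; rewrite /= !inordK // ltn_pmod.
by rewrite pair_count_ord4 !succE.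
Qed.

Lemma balanced_ord4 M e (a b : 'I_4 -> nat) : balanced M e a b <->
  balanced4 M e (a (inord 0)) (a (inord 1)) (a (inord 2)) (a (inord 3))
                (b (inord 0)) (b (inord 1)) (b (inord 2)) (b (inord 3)).
Proof.
by split=> H c w cM; have := H c w cM; rewrite !pair_count_succ_ord4 !pair_count_ord4.
Qed.

Lemma balanced_ord4P M e (a b : 'I_4 -> nat) : e < M -> (forall y, a y < M) ->
  balanced M e a b <->
  [|| e == 0, succ_perm a b | (e.*2 == M) && (alternating b && antipodal M a)].
Proof.
move=> eM aM; have a0M := aM (inord 0); have a1M := aM (inord 1).
have a2M := aM (inord 2); have a3M := aM (inord 3).
split=> [/balanced_ord4 bal | ].
  have [-> // | e_gt0] := posnP e.
  have [_ | /succ_permPn[c [w]]] := boolP (succ_perm a b); first by apply/or3P; apply: Or32.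
  rewrite pair_count_succ_ord4 pair_count_ord4.
  move=> /(balanced4_antipodal a0M a1M a2M a3M e_gt0 eM bal).
  by case=> -> ->; rewrite eqxx !orbT.
case/or3P => [/eqP-> | /succ_perm_balanced // | /andP[/eqP e2 alt]]; first exact: balanced0.
by apply/balanced_ord4/antipodal4_balanced.
Qed.

Lemma antipodal_not_succ_perm M (a b : 'I_4 -> nat) : ~~ odd M -> (forall y, a y < M) ->
  alternating b && antipodal M a -> ~~ succ_perm a b.
Proof.
move=> ev aM X; apply/negP => /succ_permP H.
have := antipodal4_unbalanced (aM _) (aM _) (aM _) (aM _) ev X.
by rewrite -pair_count_ord4 -pair_count_succ_ord4 H eqxx.
Qed.

Section FfunSums.
Variable T : finType.

Lemma sum_ffun2 (G : T -> T -> nat) :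
  \sum_(f : {ffun 'I_2 -> T}) G (f ord0) (f ord_max) = \sum_x \sum_y G x y.
Proof.
rewrite pair_bigA (reindex (fun f : {ffun 'I_2 -> T} => (f ord0, f ord_max))) //=.
exists (fun p => [ffun k : 'I_2 => if k == ord0 then p.1 else p.2]) => [f _ | [x y] _].
  by apply/ffunP => -[[|[|//]] k2]; rewrite ffunE /=; apply: congr1; apply: val_inj.
by rewrite !ffunE.
Qed.

Lemma sum_ffun4 (G : T -> T -> T -> T -> nat) :
  \sum_(f : {ffun 'I_4 -> T}) G (f (inord 0)) (f (inord 1)) (f (inord 2)) (f (inord 3)) =
  \sum_x0 \sum_x1 \sum_x2 \sum_x3 G x0 x1 x2 x3.
Proof.
transitivity (\sum_(p : (T * T) * (T * T)) G p.1.1 p.1.2 p.2.1 p.2.2).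
  rewrite (reindex (fun f : {ffun 'I_4 -> T} =>
    ((f (inord 0), f (inord 1)), (f (inord 2), f (inord 3))))) //=.
  exists (fun p => [ffun k : 'I_4 => nth p.1.1 [:: p.1.1; p.1.2; p.2.1; p.2.2] k]) => [f _ | p _].
    by apply/ffunP => -[[|[|[|[|//]]]] k4]; rewrite ffunE /=; apply: congr1;
      apply: val_inj; rewrite /= inordK.
  by case: p => [[x0 x1] [x2 x3]]; rewrite !ffunE /= !inordK.
rewrite -(pair_bigA _ (fun q r => G q.1 q.2 r.1 r.2)) /=.
rewrite -(pair_bigA _ (fun x0 x1 => \sum_r G x0 x1 r.1 r.2)) /=.
by apply: eq_bigr => x0 _; apply: eq_bigr => x1 _; rewrite -(pair_bigA _ (G x0 x1)).
Qed.

End FfunSums.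

Lemma sum_nat_eq n k : \sum_(x : 'I_n) (x == k :> nat) = (k < n).
Proof.
have [kn | nk] := ltnP k n.
  rewrite (bigD1 (Ordinal kn)) //= eqxx big1 // => x xk; apply/eqP; rewrite eqb0.
  by apply: contra xk => /eqP xk; apply/eqP/val_inj.
by rewrite big1 // => x _; apply/eqP; rewrite eqb0 neq_ltn (leq_trans (ltn_ord x) nk).
Qed.

Lemma sum_pick n k (c : bool) : k < n -> \sum_(x : 'I_n) ((x == k :> nat) && c) = c.
Proof.
move=> kn; case: c; last by rewrite big1 // => x _; rewrite andbF.
by under eq_bigr => x _ do rewrite andbT; rewrite sum_nat_eq kn.
Qed.

Lemma sum_nat_neq2 n k l : k < n -> l < n -> k != l ->
  \sum_(x : 'I_n) ((x != k :> nat) && (x != l :> nat)) = n - 2.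
Proof.
move=> kn ln kl.
have : \sum_(x : 'I_n)
    ((((x != k :> nat) && (x != l :> nat)) + (x == k :> nat)) + (x == l :> nat)) = n.
  rewrite (eq_bigr (fun _ => 1)) ?sum_nat_const ?card_ord ?muln1 // => x _.
  by case: (nat_of_ord x =P k) => [->|]; [rewrite (negbTE kl) | case: (nat_of_ord x =P l)].
by rewrite !big_split /= !sum_nat_eq kn ln; lia.
Qed.

Lemma sum_nat_neq n k : k < n -> \sum_(x : 'I_n) (x != k :> nat) = n - 1.
Proof.
move=> kn; have : \sum_(x : 'I_n) ((x != k :> nat) + (x == k :> nat)) = n.
  rewrite (eq_bigr (fun _ => 1)) ?sum_nat_const ?card_ord ?muln1 // => x _.
  by case: (x == k :> nat).
by rewrite big_split /= sum_nat_eq kn; lia.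
Qed.

Lemma sum_alternating N :
  \sum_(b : {ffun 'I_4 -> 'I_N}) alternating (fun y => val (b y)) = N * (N - 1).
Proof.
rewrite (sum_ffun4 (fun x0 x1 x2 x3 : 'I_N => alternating4 x0 x1 x2 x3 : nat)).
transitivity (\sum_(x0 : 'I_N) (N - 1)); last by rewrite sum_nat_const card_ord.
apply: eq_bigr => x0 _; rewrite -(sum_nat_neq (ltn_ord x0)); apply: eq_bigr => x1 _.
under eq_bigr => x2 _ do under eq_bigr => x3 _ do rewrite /alternating4 andbCA.
rewrite (eq_bigr _ (fun x2 _ => sum_pick _ (ltn_ord x1))) sum_pick //.
by rewrite eq_sym.
Qed.

Lemma sum_antipodal M : ~~ odd M ->
  \sum_(a : {ffun 'I_4 -> 'I_M}) antipodal M (fun y => val (a y)) = M * (M - 2).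
Proof.
move=> /even_halfK hM.
rewrite (sum_ffun4 (fun x0 x1 x2 x3 : 'I_M => antipodal4 M x0 x1 x2 x3 : nat)).
transitivity (\sum_(x0 : 'I_M) (M - 2)); last by rewrite sum_nat_const card_ord.
apply: eq_bigr => x0 _; have x0M := ltn_ord x0.
have shM x : (x + M./2) %% M < M by rewrite ltn_pmod //; lia.
rewrite -(@sum_nat_neq2 _ _ _ x0M (shM x0)); last by rewrite eq_sym shift_neq //; lia.
apply: eq_bigr => x1 _.
under eq_bigr => x2 _ do under eq_bigr => x3 _ do rewrite /antipodal4 andbCA.
by rewrite (eq_bigr _ (fun x2 _ => sum_pick _ (shM x1))) sum_pick.
Qed.

Lemma card_set_sum (T : finType) (P : pred T) : #|[set t | P t]| = \sum_t P t.
Proof.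
rewrite cardsE -sum1_card big_mkcond /=.
by apply: eq_bigr => t _; rewrite unfold_in; case: (P t).
Qed.

Lemma sum_sub_mod M (F : nat -> nat) (x : 'I_M) :
  \sum_(y : 'I_M) F (sub_mod M x y) = \sum_(e : 'I_M) F e.
Proof.
have M0 : 0 < M by apply: leq_ltn_trans (ltn_ord x).
pose h (y : 'I_M) : 'I_M := Ordinal (ltn_pmod (x + (M - y)) M0).
have h_inj : injective h.
  move=> y1 y2 /(congr1 val) /eqP; rewrite /= eqn_modDl => /eqP.
  have := ltn_ord y1; have := ltn_ord y2.
  rewrite !modn_lt_double; try lia.
  by case: ifPn; case: ifPn => ? ? ? ? E; apply: ord_inj; lia.
by rewrite [RHS](reindex_inj h_inj).
Qed.

Definition shift_solution M N e (a : {ffun 'I_4 -> 'I_M}) (b : {ffun 'I_4 -> 'I_N}) : bool :=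
  [|| e == 0, succ_perm (fun y => val (a y)) (fun y => val (b y))
    | (e.*2 == M) && (alternating (fun y => val (b y)) && antipodal M (fun y => val (a y)))].

Lemma forall_condE_4_2 M N (i : {ffun 'I_2 -> 'I_M}) (a : {ffun 'I_4 -> 'I_M})
    (b : {ffun 'I_4 -> 'I_N}) :
  [forall x, condE i a b x] = shift_solution (sub_mod M (i ord0) (i ord_max)) a b.
Proof.
set e := sub_mod _ _ _; set bv := fun y => val (b y).
have aM y : val (a y) < M := ltn_ord _.
have eM : e < M by rewrite ltn_pmod // (leq_ltn_trans _ (ltn_ord (i ord0))).
have ordS0 : ordS (ord0 : 'I_2) = ord_max by apply: val_inj.
have ordS1 : ordS (ord_max : 'I_2) = ord0 by apply: val_inj.
have exchangeE := exchange_balancedE bv (ltn_ord (i ord0)) (ltn_ord (i ord_max)) aM.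
apply/idP/idP => [/forallP/(_ ord0)/condE_exchange | ].
  by rewrite ordS0 => /exchangeE/(balanced_ord4P bv eM aM).
move/(balanced_ord4P bv eM aM)/exchangeE => H; apply/forallP => x; apply/condE_exchange.
have [->|->] : x = ord0 \/ x = ord_max.
  by case: x => -[|[|//]] x2; [left | right]; apply: val_inj.
  by rewrite ordS0.
by rewrite ordS1; apply/exchange_balanced_sym.
Qed.

Lemma count_d_4_2 M N : 0 < M ->
  count_d M N 4 2 = M * \sum_(e : 'I_M)
    \sum_(a : {ffun 'I_4 -> 'I_M}) \sum_(b : {ffun 'I_4 -> 'I_N}) shift_solution e a b.
Proof.
move=> M0; transitivity (\sum_(i : {ffun 'I_2 -> 'I_M}) \sum_(a : {ffun 'I_4 -> 'I_M})
    \sum_(b : {ffun 'I_4 -> 'I_N}) shift_solution (sub_mod M (i ord0) (i ord_max)) a b).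
  rewrite /count_d card_set_sum [RHS]pair_bigA [RHS]pair_bigA.
  by apply: eq_bigr => t _; rewrite forall_condE_4_2.
rewrite (sum_ffun2 (fun x y : 'I_M => \sum_(a : {ffun 'I_4 -> 'I_M}) \sum_(b : {ffun 'I_4 -> 'I_N})
    shift_solution (sub_mod M x y) a b)).
under eq_bigr => x _ do rewrite (sum_sub_mod (fun e => \sum_(a : {ffun 'I_4 -> 'I_M})
    \sum_(b : {ffun 'I_4 -> 'I_N}) shift_solution e a b)).
by rewrite sum_nat_const card_ord.
Qed.

Lemma double_eq M e : (e.*2 == M) = (e == M./2) && ~~ odd M.
Proof.
apply/eqP/andP => [<- | [/eqP-> /even_halfK //]].
by rewrite doubleK odd_double.
Qed.

Lemma sum_classified_shifts M (d x : bool) : 0 < M -> (~~ odd M -> x -> ~~ d) ->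
  \sum_(e : 'I_M) [|| e == 0 :> nat, d | (e.*2 == M) && x] = 1 + d * (M - 1) + (~~ odd M && x).
Proof.
move=> M0; case: d => /= dx.
  have -> : ~~ odd M && x = false by apply/negbTE/negP => /andP[ev /(dx ev)].
  rewrite (eq_bigr (fun _ => 1)) => [|e _]; last by rewrite orbT.
  by rewrite sum_nat_const card_ord; lia.
have half_ltM : M./2 < M by rewrite -divn2 ltn_Pdiv.
rewrite (eq_bigr (fun e : 'I_M => (e == 0 :> nat) + ((e == M./2 :> nat) && (~~ odd M && x)))).
  by rewrite big_split /= sum_nat_eq M0 sum_pick.
move=> e _; rewrite double_eq -andbA.
case: (nat_of_ord e =P 0) => [-> | _] /=; last by case: (_ && _).
case: (0 =P M./2) => //= h0; case ev: (odd M) => //=.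
by have := even_halfK (negbT ev); rewrite -h0; lia.
Qed.

Lemma count_delta4 M N : count_delta M N 4 =
  \sum_(a : {ffun 'I_4 -> 'I_M}) \sum_(b : {ffun 'I_4 -> 'I_N})
    succ_perm (fun y => val (a y)) (fun y => val (b y)).
Proof. by rewrite /count_delta card_set_sum [RHS]pair_bigA. Qed.

Lemma sum_shift_solution M N : 0 < M ->
  \sum_(e : 'I_M) \sum_(a : {ffun 'I_4 -> 'I_M}) \sum_(b : {ffun 'I_4 -> 'I_N})
    shift_solution e a b =
  M ^ 4 * N ^ 4 + (M - 1) * count_delta M N 4 + ~~ odd M * (M * (M - 2) * (N * (N - 1))).
Proof.
move=> M0; rewrite exchange_big; under eq_bigr => a _ do rewrite exchange_big.
transitivity (\sum_(a : {ffun 'I_4 -> 'I_M}) \sum_(b : {ffun 'I_4 -> 'I_N})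
  (1 + succ_perm (fun y => val (a y)) (fun y => val (b y)) * (M - 1) +
   (~~ odd M && (alternating (fun y => val (b y)) && antipodal M (fun y => val (a y)))))).
  apply: eq_bigr => a _; apply: eq_bigr => b _; rewrite (sum_classified_shifts M0) // => ev.
  exact: (@antipodal_not_succ_perm M (fun y => val (a y)) (fun y => val (b y)) ev
    (fun y => ltn_ord _)).
under eq_bigr => a _ do rewrite !big_split /=.
rewrite !big_split /= count_delta4; congr (_ + _ + _).
- under eq_bigr => a _ do rewrite sum_nat_const card_ffun !card_ord muln1.
  by rewrite sum_nat_const card_ffun !card_ord.
- by rewrite [RHS]mulnC big_distrl; apply: eq_bigr => a _; rewrite big_distrl.
case ev: (odd M) => /=; first by rewrite big1 // => a _; rewrite big1.
under eq_bigr => a _ do under eq_bigr => b _ do rewrite -mulnb mulnC.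
under eq_bigr => a _ do rewrite -big_distrr /=.
by rewrite -big_distrl /= sum_antipodal ?ev // sum_alternating mul1n.
Qed.

Import Order.TTheory GRing.Theory Num.Theory.
Local Open Scope ring_scope.

Theorem theorem4p1 (M N : nat) (hM : (0 < M)%N) (hN : (0 < N)%N) :
  d_pr 4 2 M N =
  beta_p2 4 M N +
  (if ~~ odd M then ((M%:R - 2) * (N%:R - 1)) / ((M ^ 4 * N ^ 3)%N)%:R else 0 : rat).
Proof.
rewrite /d_pr /beta_p2 /delta_p (count_d_4_2 N hM) (sum_shift_solution N hM).
have M0 : (M%:R : rat) != 0 by rewrite pnatr_eq0 -lt0n.
have N0 : (N%:R : rat) != 0 by rewrite pnatr_eq0 -lt0n.
case ev: (odd M) => /=.
  by rewrite mul0n addn0 !natrM !natrD !natrM ?natrX ?natrB //; field; rewrite M0 N0.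
have M2 : (2 <= M)%N by case: (M) ev hM => [|[|]].
by rewrite mul1n !natrM !natrD !natrM ?natrX !natrB //; field; rewrite M0 N0.
Qed.
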